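(* Let $M\ge1$, $T\ge M$, $n\ge2$ be integers and $p=\frac1{M+1}$. Let $\mathbf{c}_1,\dots,\mathbf{c}_T\in\{0,1\}^n$ be random words whose $Tn$ bits are independent, each equal to $1$ with probability $p$. Let $E_{\mathrm{syn}}$ be the event that there exist $t\in\{1,\dots,T\}$, $d\in\{1,\dots,n-1\}$, a set $S\subseteq\{1,\dots,T\}\setminus\{t\}$ with $|S|=M-1$, and shifts $s_u\in\{0,\dots,n-1\}$ ($u\in S$) such that $\sigma_d(\mathbf{c}_t)\vee\bigvee_{u\in S}\sigma_{s_u}(\mathbf{c}_u)$ covers $\mathbf{c}_t$. Then \[\Pr(E_{\mathrm{syn}})\le\exp\!\Big(M\ln T+M\ln n-\tfrac{n}{M+1}\mathrm{e}^{-1}\Big).\]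
   Context: $\vee$ is componentwise Boolean OR (an empty OR is the all-zero vector). A vector $\mathbf{y}$ covers $\mathbf{z}$ if $y_i\ge z_i$ for all $i$. For $\mathbf{c}\in\{0,1\}^n$ and $s\in\{0,\dots,n-1\}$, $\sigma_s(\mathbf{c})$ is defined by $(\sigma_s(\mathbf{c}))_i=c_{i-s}$ if $i>s$ and $0$ otherwise. *)

From HB Require Import structures.
From mathcomp Require Import all_boot all_order all_algebra.
From mathcomp Require Import reals sequences exp.
Set Implicit Arguments. Unset Strict Implicit. Unset Printing Implicit Defensive.
Import Order.TTheory GRing.Theory Num.Theory.

(* Words in {0,1}^n, positions indexed 0..n-1 (paper: 1..n). *)
Definition word (n : nat) := {ffun 'I_n -> bool}.

Definition wbit n (c : word n) (k : nat) : bool :=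
  if insub k is Some i then c i else false.

(* sigma_s(c): (sigma_s c)_j = c_{j-s} if j >= s (0-based; paper's i > s), else 0 *)
Definition shiftw n (s : nat) (c : word n) (j : 'I_n) : bool :=
  (s <= j) && wbit c (j - s).

Definition config (T n : nat) := {ffun 'I_T -> word n}.

Definition Esyn (M T n : nat) (c : config T n) : bool :=
  [exists t : 'I_T, exists d : 'I_n, exists S : {set 'I_T},
     exists s : {ffun 'I_T -> 'I_n},
     [&& 0 < (d : nat), t \notin S, #|S| == M.-1 &
       [forall j : 'I_n,
          c t j ==> (shiftw d (c t) j || [exists u in S, shiftw (s u) (c u) j])]]].

Definition cweight (R : realType) (p : R) T n (c : config T n) : R :=
  \prod_(t : 'I_T) \prod_(i : 'I_n) (if c t i then p else 1 - p).

Definition Prob (R : realType) (p : R) T n (E : pred (config T n)) : R :=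
  \sum_(c : config T n | E c) cweight p c.

From HB Require Import structures.
From mathcomp Require Import all_boot all_order all_algebra.
From mathcomp Require Import reals sequences exp.
From mathcomp Require Import ring lra zify.
Import Order.TTheory GRing.Theory Num.Theory.
Local Open Scope ring_scope.
Set Implicit Arguments. Unset Strict Implicit. Unset Printing Implicit Defensive.

(* Union bound over the choices of t, d, S and the shifts s_u (u in S): there are at most
   T^M n^M of them once the irrelevant shifts are normalised.  For a fixed choice, position j
   of c_t is uncovered when c_t has a 1 at j, a 0 at j - d, and every c_u a 0 at j - s_u, which
   has probability at least q = p (1 - p)^M >= p / e.  These events are not independent along j, because
   c_t overlaps its own shift.  Scanning the positions from left to right, the expectation of a
   potential that weights by a constant w every 1 of c_t whose shifted copy still lies ahead
   shrinks by the factor 1 - q at each position, so the covering event has probability at most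
   (1 - q)^n <= exp (- n p / e). *)

Section SetBit.
Variables T n : nat.
Implicit Types (c : config T n) (u v : 'I_T) (i : nat) (b : bool).

Definition set_bit c u i b : config T n :=
  [ffun v => if v == u then [ffun j : 'I_n => if (j : nat) == i then b else c v j] else c v].

Lemma set_bit_id c u (o : 'I_n) : set_bit c u o (c u o) = c.
Proof.
apply/ffunP => v; rewrite ffunE; case: eqP => // ->.
by apply/ffunP => j; rewrite ffunE; case: eqP => // /val_inj ->.
Qed.

Lemma set_bit_overwrite c u i b b' : set_bit (set_bit c u i b) u i b' = set_bit c u i b'.
Proof.
apply/ffunP => v; rewrite !ffunE; case: eqP => // ->.
by apply/ffunP => j; rewrite !ffunE; case: eqP => // _; rewrite ffunE eqxx.
Qed.

Lemma set_bit_at c u (o : 'I_n) b : set_bit c u o b u o = b.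
Proof. by rewrite ffunE eqxx ffunE eqxx. Qed.

Lemma set_bit_other c u i b v (j : 'I_n) :
  (v != u) || ((j : nat) != i) -> set_bit c u i b v j = c v j.
Proof.
rewrite ffunE; case: eqP => [->|//] /= ji.
by rewrite ffunE ifF //; apply/negbTE.
Qed.

Lemma set_bit_neq c u i b v : v != u -> set_bit c u i b v = c v.
Proof. by rewrite ffunE => /negbTE ->. Qed.

Lemma wbit_set_bit c u i b v (j : nat) :
  (v != u) || (j != i) -> wbit (set_bit c u i b v) j = wbit (c v) j.
Proof. by rewrite /wbit; case: insubP => // o _ <-; apply: set_bit_other. Qed.

Lemma wbit_set_bit_at c u i b : (i < n)%N -> wbit (set_bit c u i b u) i = b.
Proof. by move=> lt_in; rewrite /wbit insubT /= !ffunE eqxx ffunE eqxx. Qed.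

Lemma shiftw_set_bit c u i b v sh (j : 'I_n) :
  (v != u) || ((j : nat) != i + sh)%N ->
  shiftw sh (set_bit c u i b v) j = shiftw sh (c v) j.
Proof.
move=> h; rewrite /shiftw; case: (leqP sh j) => //= le_sh_j; apply: wbit_set_bit.
by case/orP: h => [->//|/eqP h]; apply/orP; right; apply/eqP; lia.
Qed.

End SetBit.

Lemma wbitE n (w : word n) (j : 'I_n) : wbit w j = w j.
Proof. by rewrite /wbit valK. Qed.

Section ProductBernoulli.
Variables (R : realType) (p : R) (T n : nat).
Implicit Types (c : config T n) (F G : config T n -> R) (u : 'I_T) (b : bool).

Definition expect F : R := \sum_c cweight p c * F c.

Lemma eq_expect F G : F =1 G -> expect F = expect G.
Proof. by move=> eqFG; apply: eq_bigr => c _; rewrite eqFG. Qed.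

Lemma expectD F G : expect (fun c => F c + G c) = expect F + expect G.
Proof. by rewrite -big_split; apply: eq_bigr => c _; rewrite mulrDr. Qed.

Lemma expectB F G : expect (fun c => F c - G c) = expect F - expect G.
Proof. by rewrite -sumrB; apply: eq_bigr => c _; rewrite mulrBr. Qed.

Lemma expectMr F a : expect (fun c => F c * a) = expect F * a.
Proof. by rewrite mulr_suml; apply: eq_bigr => c _; rewrite mulrA. Qed.

Lemma expect_sum (I : finType) (P : pred I) (F : I -> config T n -> R) :
  expect (fun c => \sum_(i | P i) F i c) = \sum_(i | P i) expect (F i).
Proof. by rewrite /expect; under eq_bigr do rewrite mulr_sumr; rewrite exchange_big. Qed.

Lemma expect1 : expect (fun=> 1) = 1.
Proof.
rewrite /expect /cweight; under eq_bigr do rewrite mulr1.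
rewrite -(bigA_distr_bigA (fun t (w : word n) => \prod_i (if w i then p else 1 - p))).
apply: big1 => t _; rewrite -(bigA_distr_bigA (fun (i : 'I_n) b => if b then p else 1 - p)).
by apply: big1 => i _; rewrite big_bool /= addrC subrK.
Qed.

Definition bern b : R := if b then p else 1 - p.

Definition weight_off u (o : 'I_n) c : R :=
  \prod_t \prod_i (if (t == u) && (i == o) then 1 else bern (c t i)).

Lemma cweight_split u (o : 'I_n) c :
  cweight p c = bern (c u o) * weight_off u o c.
Proof.
rewrite /cweight /weight_off (bigD1 u) //= [in RHS](bigD1 u) //= (bigD1 o) //=.
rewrite [in RHS](bigD1 o) //= !eqxx mul1r mulrA; congr (_ * _ * _).
  by apply: eq_bigr => i /negbTE ->.
by apply: eq_bigr => t /negbTE ->; apply: eq_bigr.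
Qed.

Lemma weight_off_set_bit u (o : 'I_n) c b : weight_off u o (set_bit c u o b) = weight_off u o c.
Proof.
apply: eq_bigr => t _; apply: eq_bigr => i _.
by case: ifP => // /negbT; rewrite negb_and => ne; rewrite set_bit_other.
Qed.

Definition flip_bit c u (o : 'I_n) := set_bit c u o (~~ c u o).

Lemma flip_bitK u (o : 'I_n) : involutive (fun c => flip_bit c u o).
Proof. by move=> c; rewrite /flip_bit set_bit_overwrite set_bit_at negbK set_bit_id. Qed.

Lemma expect_flip_bit2 u (o : 'I_n) F :
  2 * expect F = \sum_c weight_off u o c *
    (bern (c u o) * F c + bern (~~ c u o) * F (flip_bit c u o)).
Proof.
rewrite mulr2n mulrDl mul1r {2}/expect (reindex_inj (inv_inj (@flip_bitK u o))) -big_split.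
apply: eq_bigr => c _ /=.
rewrite !(cweight_split u o) /flip_bit set_bit_at weight_off_set_bit; ring.
Qed.

Lemma expect_resample u (o : 'I_n) F :
  expect F = expect (fun c => p * F (set_bit c u o true) + (1 - p) * F (set_bit c u o false)).
Proof.
apply: (@mulfI _ 2); first by rewrite pnatr_eq0.
rewrite !(expect_flip_bit2 u o); apply: eq_bigr => c _; congr (_ * _).
rewrite /flip_bit /bern !set_bit_overwrite.
by case: (c u o) (set_bit_id c u o) => /= ->; ring.
Qed.

Definition free_of_bit (h : config T n -> R) u i := forall c b, h (set_bit c u i b) = h c.

Lemma expect_factor h u i (g : bool -> R) : (i < n)%N -> free_of_bit h u i ->
  expect (fun c => h c * g (wbit (c u) i)) = expect h * (p * g true + (1 - p) * g false).
Proof.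
move=> lt_in hfree; rewrite (expect_resample u (Ordinal lt_in)) /= -expectMr.
by apply: eq_expect => c; rewrite !hfree !wbit_set_bit_at //; ring.
Qed.

Lemma expect_prod (l : seq 'I_T) h (a : 'I_T -> nat) (g : 'I_T -> bool -> R) :
  uniq l -> {in l, forall u, a u < n}%N -> {in l, forall u, free_of_bit h u (a u)} ->
  expect (fun c => h c * \prod_(u <- l) g u (wbit (c u) (a u))) =
  expect h * \prod_(u <- l) (p * g u true + (1 - p) * g u false).
Proof.
elim: l h => [|u l IH] h /=.
  by move=> _ _ _; rewrite big_nil -expectMr; apply: eq_expect => c; rewrite big_nil.
case/andP => ul uniq_l lt_a hfree; have u_l := mem_head u l.
have v_l : {subset l <= u :: l} by move=> v vl; rewrite inE vl orbT.
rewrite big_cons mulrA -(expect_factor (g u) (lt_a u u_l) (hfree u u_l)) -IH //.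
- by apply: eq_expect => c; rewrite big_cons mulrA.
- by move=> v vl; apply/lt_a/v_l.
move=> v vl c b; rewrite (hfree v (v_l v vl)) set_bit_neq //.
by apply: contraNneq ul => ->.
Qed.

Hypothesis p01 : 0 <= p <= 1.

Lemma cweight_ge0 c : 0 <= cweight p c.
Proof.
case/andP: p01 => p0 p1; do 2!apply: prodr_ge0 => ? _.
by case: ifP; rewrite ?subr_ge0.
Qed.

Lemma ler_expect F G : (forall c, F c <= G c) -> expect F <= expect G.
Proof. by move=> leFG; apply: ler_sum => c _; rewrite ler_wpM2l ?cweight_ge0. Qed.

Lemma expect_ge0 F : (forall c, 0 <= F c) -> 0 <= expect F.
Proof. by move=> F0; apply: sumr_ge0 => c _; rewrite mulr_ge0 ?cweight_ge0. Qed.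

Lemma Prob_expect (E : pred (config T n)) : Prob p E = expect (fun c => (E c)%:R).
Proof. by rewrite /Prob /expect big_mkcond; apply: eq_bigr => c _; case: (E c); rewrite ?mulr1 ?mulr0. Qed.

Lemma Prob_union_bound (I : finType) (P : pred I) (E : pred (config T n))
    (F : I -> pred (config T n)) (L : R) :
  (forall c, E c -> exists2 i, P i & F i c) -> (forall i, P i -> Prob p (F i) <= L) ->
  Prob p E <= #|P|%:R * L.
Proof.
move=> cover boundF.
apply: (@le_trans _ _ (\sum_(i | P i) Prob p (F i))); last first.
  by rewrite -sum1_card natr_sum mulr_suml; apply: ler_sum => i Pi; rewrite mul1r boundF.
rewrite Prob_expect; under eq_bigr do rewrite Prob_expect; rewrite -expect_sum.
apply: ler_expect => c; case Ec: (E c); last by apply: sumr_ge0 => i _; rewrite ler0n.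
have [i Pi Fic] := cover c Ec; rewrite (bigD1 i) //= Fic lerDl.
by apply: sumr_ge0 => j _; rewrite ler0n.
Qed.

End ProductBernoulli.

(* [w] is the fixed point of [w |-> (p w + 1 - p) / (1 - q)], so the first inequality is an equality. *)
Lemma potential_constants (R : realFieldType) (p r : R) : 0 <= p < 1 -> 0 <= r <= 1 ->
  let q := p * (1 - p) * r in let w := (1 - p) / (1 - p - q) in
  [/\ 1 <= w, 0 <= 1 - q, p * w + (1 - p) <= (1 - q) * w &
      p * w + (1 - p) - w * p * r <= 1 - q].
Proof.
move=> /andP [p0 p1] /andP [r0 r1] q w.
have q0 : 0 <= q by rewrite !mulr_ge0 // subr_ge0 ltW.
have q_le : q <= p * (1 - p) by rewrite -[leRHS]mulr1 ler_wpM2l // mulr_ge0 // subr_ge0 ltW.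
have den_gt0 : 0 < 1 - p - q by nra.
have wE : w * (1 - p - q) = 1 - p by rewrite divfK // gt_eqF.
have w_ge1 : 1 <= w by nra.
split; [done | nra | nra |].
have : w * p * (1 - r) * (1 - p - q) <= (p - q) * (1 - p - q).
  have -> : w * p * (1 - r) * (1 - p - q) = (1 - p) * p * (1 - r).
    by transitivity (w * (1 - p - q) * (p * (1 - r))); [ring | rewrite wE; ring].
  have : 0 <= q ^+ 2 by apply: sqr_ge0.
  by rewrite /q; nra.
by rewrite ler_pM2r // => h; nra.
Qed.

Section Covering.
Variables (T n : nat) (t : 'I_T) (d : nat) (S : {set 'I_T}) (s : {ffun 'I_T -> 'I_n}).
Implicit Types (c : config T n) (v : 'I_T) (k i : nat) (b : bool).

Definition covered c (j : 'I_n) : bool :=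
  c t j ==> (shiftw d (c t) j || [exists u in S, shiftw (s u) (c u) j]).

Definition covered_upto k c : bool := [forall j : 'I_n, (j < k)%N ==> covered c j].

Definition syn_cover c : bool := [forall j, covered c j].

Lemma covered_upto_n c : covered_upto n c = syn_cover c.
Proof. by apply: eq_forallb => j; rewrite ltn_ord. Qed.

Lemma covered_uptoS (k : 'I_n) c : covered_upto k.+1 c = covered_upto k c && covered c k.
Proof.
apply/forallP/andP => [cov|[/forallP cov cov_k] j].
  split; last by have := cov k; rewrite ltnSn.
  by apply/forallP => j; apply/implyP => lt_jk; have := cov j; rewrite ltnS ltnW.
apply/implyP; rewrite ltnS leq_eqVlt => /orP [/eqP/val_inj -> // | lt_jk].
by have := cov j; rewrite lt_jk.
Qed.

Hypotheses (d_gt0 : (0 < d)%N) (tS : t \notin S).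

(* Bit [(v, i)] is not yet examined at stage [k]: positions [j < k] see neither it nor its shifts. *)
Definition unseen k v i := (v = t -> k <= i)%N /\ (v \in S -> k <= i + s v)%N.

Lemma unseen_bit k v i (j : nat) : (j < k)%N -> unseen k v i -> (t != v) || (j != i).
Proof. by move=> lt_jk [vt _]; case: (eqVneq t v) => //= tv; have := vt (esym tv); lia. Qed.

Lemma unseen_shifted_bit k v i (j : nat) : (j <= k)%N -> unseen k v i -> (t != v) || (j != i + d)%N.
Proof. by move=> le_jk [vt _]; case: (eqVneq t v) => //= tv; have := vt (esym tv); lia. Qed.

Lemma shiftw_set_bit_unseen k v i b c (j : 'I_n) : (j <= k)%N -> unseen k v i ->
  shiftw d (set_bit c v i b t) j = shiftw d (c t) j.
Proof. by move=> le_jk unseen_vi; rewrite shiftw_set_bit // (unseen_shifted_bit le_jk). Qed.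

Lemma covered_set_bit k v i b c (j : 'I_n) : (j < k)%N -> unseen k v i ->
  covered (set_bit c v i b) j = covered c j.
Proof.
move=> lt_jk unseen_vi; have [_ vS] := unseen_vi.
rewrite /covered (shiftw_set_bit_unseen _ _ (ltnW lt_jk) unseen_vi).
rewrite set_bit_other ?(unseen_bit lt_jk) //.
congr (_ ==> (_ || _)); apply: eq_existsb => u; case uS: (u \in S) => //=.
rewrite shiftw_set_bit //; case: (eqVneq u v) => //= uv; subst u.
by have := vS uS; apply: contraL => /eqP; lia.
Qed.

Lemma covered_upto_set_bit k v i b c : unseen k v i ->
  covered_upto k (set_bit c v i b) = covered_upto k c.
Proof.
move=> unseen_vi; apply: eq_forallb => j; case: ltnP => //= lt_jk.
by rewrite (covered_set_bit _ _ lt_jk unseen_vi).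
Qed.

Section Potential.
Variables (R : realType) (w : R).

Definition wpow b : R := if b then w else 1.

(* The potential at stage [k] records that positions [< k] are covered and weights by [w] each
   1-bit of [c t] in the window [[k - d, k)], whose shifted copies still lie ahead; [potential_open]
   drops the oldest window position [k - d], the one [shiftw d] moves onto position [k]. *)
Definition potential k c : R :=
  (covered_upto k c)%:R * \prod_(i : 'I_n | ((i < k) && (k <= i + d))%N) wpow (c t i).

Definition potential_open k c : R :=
  (covered_upto k c)%:R * \prod_(i : 'I_n | ((i < k) && (k < i + d))%N) wpow (c t i).

Lemma potentialE (k : 'I_n) c :
  potential k c = potential_open k c * wpow (shiftw d (c t) k).
Proof.
rewrite /potential /potential_open -mulrA; congr (_ * _).
rewrite (bigID (fun i : 'I_n => i + d == k)%N) /= mulrC; congr (_ * _).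
  by apply: eq_bigl => i; apply/andP/andP => -[]; [case/andP|]; lia.
rewrite /shiftw; case: (leqP d k) => le_dk /=.
  have lt_kd_n : (k - d < n)%N by have := ltn_ord k; lia.
  rewrite (big_pred1 (Ordinal lt_kd_n)) /wbit ?insubT // => i /=.
  apply/andP/eqP => [[_ /eqP ?]|->]; first by apply: val_inj => /=; lia.
  by rewrite /= subnK // eqxx; split => //; apply/andP; lia.
by rewrite big_pred0 // => i; apply/negP => /andP [_ /eqP]; lia.
Qed.

Lemma potentialS (k : 'I_n) c :
  potential k.+1 c = potential_open k c * (covered c k)%:R * wpow (c t k).
Proof.
rewrite /potential /potential_open covered_uptoS -mulnb natrM -!mulrA; congr (_ * _).
rewrite (bigD1 k) /=; last by apply/andP; lia.
rewrite (eq_bigl (fun i : 'I_n => i < k < i + d)%N) => [|i]; first by ring.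
by rewrite -val_eqE /=; lia.
Qed.

Definition others_miss c (k : 'I_n) : bool := ~~ [exists u in S, shiftw (s u) (c u) k].

Lemma others_missE c (k : 'I_n) : ((others_miss c k)%:R : R) =
  \prod_(u <- [seq u <- enum S | s u <= k]%N) (~~ wbit (c u) (k - s u))%:R.
Proof.
rewrite big_filter big_enum_cond /others_miss; case: existsP => [[u /andP [uS]]|none] /=.
  by rewrite /shiftw => /andP [le_su cu]; rewrite (bigD1 u) ?uS //= cu mul0r.
rewrite big1 // => u /andP [uS le_su]; case cu: (wbit _ _) => //.
by case: none; exists u; rewrite uS /shiftw le_su cu.
Qed.

Definition potential_unshifted (k : 'I_n) c : R :=
  potential_open k c * (~~ shiftw d (c t) k)%:R.

Lemma potential_split (k : 'I_n) c :
  potential k c = potential_open k c * (shiftw d (c t) k)%:R * w + potential_unshifted k c.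
Proof. by rewrite potentialE /potential_unshifted /wpow; case: shiftw => /=; ring. Qed.

Lemma potentialS_split (k : 'I_n) c : potential k.+1 c = potential_open k c * wpow (wbit (c t) k)
  - potential_unshifted k c * (others_miss c k)%:R * (wbit (c t) k)%:R * w.
Proof.
rewrite potentialS /potential_unshifted /covered /others_miss wbitE.
by case: shiftw; case: (c t k); case: [exists u in S, _]; rewrite /wpow /=; ring.
Qed.

Lemma potential_open_ge0 k c : 0 <= w -> 0 <= potential_open k c.
Proof.
by move=> w_ge0; rewrite mulr_ge0 ?ler0n //; apply: prodr_ge0 => i _; rewrite /wpow; case: ifP.
Qed.

Lemma potential_open_set_bit k v i b c : unseen k v i ->
  potential_open k (set_bit c v i b) = potential_open k c.
Proof.
move=> unseen_vi; rewrite /potential_open covered_upto_set_bit //; congr (_ * _).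
by apply: eq_bigr => j /andP [lt_jk _]; rewrite set_bit_other ?(unseen_bit lt_jk).
Qed.

Lemma potential_open_shift_free (k : 'I_n) (g : bool -> R) v i : unseen k v i ->
  free_of_bit (fun c => potential_open k c * g (shiftw d (c t) k)) v i.
Proof.
move=> unseen_vi c b /=.
by rewrite potential_open_set_bit // (shiftw_set_bit_unseen _ _ (leqnn k) unseen_vi).
Qed.

Section Step.
Variables (p lam : R).
Hypotheses (p01 : 0 <= p <= 1) (w_ge0 : 0 <= w).

(* Independence: the bits [(t, k)] and [(u, k - s u)] read here are [unseen] at stage [k]. *)
Lemma expect_fresh_uncovered (k : 'I_n) :
  p * (1 - p) ^+ #|S| * expect p (potential_unshifted k) <=
  expect p (fun c => potential_unshifted k c * (others_miss c k)%:R * (wbit (c t) k)%:R).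
Proof.
pose l := [seq u <- enum S | s u <= k]%N.
have unseen_tk : unseen k t k by split=> // tS'; case/negP: tS.
have unseen_l u : u \in l -> unseen k u (k - s u)%N.
  rewrite mem_filter mem_enum => /andP [le_su uS].
  by split=> [ut|_]; [case/negP: tS; rewrite -ut | lia].
have free_unshifted v i : unseen k v i -> free_of_bit (potential_unshifted k) v i.
  exact: (potential_open_shift_free (fun x => (~~ x)%:R)).
have free_miss c b : others_miss (set_bit c t k b) k = others_miss c k.
  congr (~~ _); apply: eq_existsb => u; case uS: (u \in S) => //=.
  by rewrite shiftw_set_bit //; apply/orP; left; apply: contraNneq tS => <-.
rewrite (expect_factor p (fun x : bool => x%:R) (ltn_ord k)) /=; last first.
  by move=> c b /=; rewrite (free_unshifted _ _ unseen_tk c b) free_miss.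
have E_miss : expect p (fun c => potential_unshifted k c * (others_miss c k)%:R) =
    expect p (potential_unshifted k) * \prod_(u <- l) (1 - p).
  have uniq_l : uniq l by rewrite filter_uniq ?enum_uniq.
  under eq_expect do rewrite others_missE.
  rewrite (expect_prod p (fun _ x => (~~ x)%:R)) //.
  - by congr (_ * _); apply: eq_bigr => u _; rewrite /= mulr0 mulr1 add0r.
  - by move=> u _; have := ltn_ord k; lia.
  by move=> u /unseen_l; apply: free_unshifted.
have [p_ge0 p_le1] := andP p01.
have prod_ge : (1 - p) ^+ #|S| <= \prod_(u <- l) (1 - p).
  rewrite big_filter big_enum_cond prodr_const.
  by apply: ler_wiXn2l; [lra | lra | apply/subset_leq_card/subsetP => u /andP []].
have E_ge0 : 0 <= expect p (potential_unshifted k).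
  by apply: expect_ge0 => // c; rewrite mulr_ge0 ?potential_open_ge0 ?ler0n.
rewrite E_miss mulr0 mulr1 addr0.
have := ler_wpM2l (mulr_ge0 E_ge0 p_ge0) prod_ge; nra.
Qed.

Hypotheses (lam_shifted : p * w + (1 - p) <= lam * w)
  (lam_unshifted : p * w + (1 - p) - w * p * (1 - p) ^+ #|S| <= lam).

Lemma expect_potentialS (k : 'I_n) :
  expect p (potential k.+1) <= lam * expect p (potential k).
Proof.
have unseen_tk : unseen k t k by split=> // tS'; case/negP: tS.
pose A := expect p (fun c => potential_open k c * (shiftw d (c t) k)%:R).
pose B := expect p (potential_unshifted k).
have E_open : expect p (potential_open k) = A + B.
  rewrite -expectD; apply: eq_expect => c.
  by rewrite /potential_unshifted; case: shiftw; rewrite /= ?mulr1 ?mulr0 ?addr0 ?add0r.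
rewrite (eq_expect p (potentialS_split k)) expectB expectMr expect_factor //; last first.
  by move=> c b; rewrite potential_open_set_bit.
rewrite (eq_expect p (potential_split k)) expectD expectMr E_open -/A -/B /=.
have A_ge0 : 0 <= A by apply: expect_ge0 => // c; rewrite mulr_ge0 ?potential_open_ge0.
have B_ge0 : 0 <= B by apply: expect_ge0 => // c; rewrite mulr_ge0 ?potential_open_ge0.
have := expect_fresh_uncovered k; rewrite -/B => fresh.
have := ler_wpM2l A_ge0 lam_shifted; have := ler_wpM2l B_ge0 lam_unshifted.
have := ler_wpM2l w_ge0 fresh; nra.
Qed.

Lemma expect_syn_cover_le : 1 <= w -> 0 <= lam ->
  expect p (fun c => (syn_cover c)%:R) <= lam ^+ n.
Proof.
move=> w_ge1 lam_ge0.
have expect_potential k : (k <= n)%N -> expect p (potential k) <= lam ^+ k.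
  elim: k => [_|k IH lt_kn].
    rewrite expr0 -(expect1 p T n); apply: ler_expect => // c.
    rewrite /potential big_pred0 // mulr1.
    by have -> : covered_upto 0 c by apply/forallP.
  apply: le_trans (expect_potentialS (Ordinal lt_kn)) _.
  by rewrite exprS ler_wpM2l // IH // ltnW.
apply: le_trans (expect_potential n (leqnn n)); apply: ler_expect => // c.
rewrite /potential covered_upto_n; case: (syn_cover c); rewrite ?mul0r // mul1r.
apply: (big_ind (fun x => 1 <= x)) => // [x y|i _]; first exact: mulr_ege1.
by rewrite /wpow; case: ifP.
Qed.

End Step.
End Potential.
Lemma expect_syn_cover (R : realType) (p : R) : 0 <= p < 1 ->
  expect p (fun c => (syn_cover c)%:R) <= (1 - p * (1 - p) ^+ #|S|.+1) ^+ n.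
Proof.
move=> p01; have [p0 p1] := andP p01.
have r01 : 0 <= (1 - p) ^+ #|S| <= 1 by rewrite exprn_ge0 ?exprn_ile1 //; lra.
have [w_ge1 q_le1 lam_shifted lam_unshifted] := potential_constants p01 r01.
rewrite exprS mulrA; apply: (expect_syn_cover_le _ _ lam_shifted lam_unshifted) => //.
- by rewrite p0 ltW.
- exact: le_trans w_ge1.
Qed.

End Covering.

Lemma bin_leq_exp m k : ('C(m, k) <= m ^ k)%N.
Proof.
have ffact_leq_exp j : (m ^_ j <= m ^ j)%N.
  by elim: j => // j IH; rewrite ffactnSr expnSr leq_mul ?leq_subr.
by apply: leq_trans (ffact_leq_exp k); rewrite -bin_ffact leq_pmulr ?fact_gt0.
Qed.

Section UnionBound.
Variables (M T n : nat) (i0 : 'I_n).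

Definition syn_index := ('I_T * 'I_n * ({set 'I_T} * {ffun 'I_T -> 'I_n}))%type.

(* Shifts outside [S] are irrelevant; normalising them to [i0] keeps the index set small. *)
Definition admissible (x : syn_index) : bool :=
  let: (t, d, (A, s)) := x in [&& (0 < d)%N, t \notin A, #|A| == M.-1 & s \in pffun_on i0 A predT].

Lemma Esyn_admissible (c : config T n) : Esyn M c ->
  exists2 x : syn_index, admissible x & syn_cover x.1.1 x.1.2 x.2.1 x.2.2 c.
Proof.
case/existsP => t /existsP [d /existsP [S /existsP [s /and4P [d_gt0 tS cardS cov]]]].
pose s' := [ffun u => if u \in S then s u else i0].
exists (t, d, (S, s')); first rewrite /= d_gt0 tS cardS /=.
  by apply/pffun_onP; split=> [|//]; apply/supportP => u uS; rewrite ffunE (negbTE uS).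
apply/forallP => j; rewrite /covered /=; have /implyP cov_j := forallP cov j.
apply/implyP => /cov_j /orP [-> // | /existsP [u /andP [uS shift_u]]].
by apply/orP; right; apply/existsP; exists u; rewrite uS ffunE uS.
Qed.

Lemma card_admissible : (0 < M)%N -> (#|admissible| <= T ^ M * n ^ M)%N.
Proof.
move=> M_gt0; pose Q (y : {set 'I_T} * {ffun 'I_T -> 'I_n}) :=
  (#|y.1| == M.-1) && (y.2 \in pffun_on i0 y.1 predT).
apply: (@leq_trans #|[pred x : syn_index | Q x.2]|).
  apply/subset_leq_card/subsetP => -[[t d] [S s]] /and4P [_ _ cardS s_on].
  by rewrite inE /Q /= cardS s_on.
have cardQ : #|Q| = ('C(T, M.-1) * n ^ M.-1)%N.
  rewrite -sum1_card -(pair_big_dep (fun S : {set 'I_T} => #|S| == M.-1)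
    (fun S s => s \in pffun_on i0 S predT) (fun _ _ => 1%N)) /=.
  rewrite (eq_bigr (fun=> n ^ M.-1)%N) => [|S /eqP cardS].
    by rewrite sum_nat_cond_const card_draws card_ord.
  by rewrite sum1_card card_pffun_on card_ord cardS.
rewrite -sum1_card -(pair_big xpredT Q (fun _ _ => 1%N)) /= sum_nat_const.
rewrite card_prod !card_ord sum1_card cardQ.
by rewrite -(prednK M_gt0) !expnS /= mulnACA leq_mul // leq_mul2l bin_leq_exp orbT.
Qed.

End UnionBound.

Lemma expRN1_le_pow (R : realType) (M : nat) : (0 < M)%N ->
  expR (-1) <= (1 - (M.+1)%:R^-1) ^+ M :> R.
Proof.
move=> M_gt0; set m : R := M%:R; have m_gt0 : 0 < m by rewrite ltr0n.
have mV_gt0 : 0 < m^-1 by rewrite invr_gt0.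
have -> : (M.+1)%:R = m + 1 :> R by rewrite -addn1 natrD.
have -> : -1 = M%:R * - m^-1 :> R by rewrite -/m mulrN divff ?gt_eqF.
have base_ge : expR (- m^-1) <= 1 - (m + 1)^-1.
  have : (1 + m^-1) * expR (- m^-1) <= 1.
    by rewrite -[leRHS](expRxMexpNx_1 m^-1) ler_wpM2r ?expR_ge0 ?expR_ge1Dx.
  have -> : 1 - (m + 1)^-1 = (1 + m^-1)^-1 by field; rewrite !gt_eqF //; lra.
  have m1_gt0 : 0 < 1 + m^-1 by rewrite addr_gt0.
  by move=> le1; rewrite -(ler_pM2r m1_gt0) mulVf ?gt_eqF // mulrC.
rewrite expRM_natl lerXn2r ?nnegrE ?expR_ge0 //.
exact: le_trans (expR_ge0 _) base_ge.
Qed.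

Lemma union_tail_le_expR (R : realType) (M T n N : nat) (p q : R) :
  (0 < T)%N -> (0 < n)%N -> (N <= T ^ M * n ^ M)%N -> p * expR (-1) <= q -> q <= 1 ->
  N%:R * (1 - q) ^+ n <= expR (M%:R * ln T%:R + M%:R * ln n%:R - n%:R * p * expR (-1)).
Proof.
move=> T_gt0 n_gt0 le_N le_q q_le1.
have -> : M%:R * ln T%:R + M%:R * ln n%:R - n%:R * p * expR (-1) =
  M%:R * ln T%:R + M%:R * ln n%:R + n%:R * - (p * expR (-1)) :> R by ring.
rewrite !expRD !expRM_natl !lnK ?posrE ?ltr0n //; apply: ler_pM.
- by rewrite ler0n.
- by rewrite exprn_ge0 // subr_ge0.
- by rewrite -!natrX -natrM ler_nat.
rewrite lerXn2r ?nnegrE ?expR_ge0 ?subr_ge0 //.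
by apply: le_trans (expR_ge1Dx (- q)) _; rewrite ler_expR lerN2.
Qed.

Unset Implicit Arguments.

Theorem mainTheorem6 (R : realType) (M T n : nat) :
  (1 <= M)%N -> (M <= T)%N -> (2 <= n)%N ->
  let p : R := (M.+1)%:R^-1 in
  Prob p (@Esyn M T n) <=
    expR (M%:R * ln (T%:R) + M%:R * ln (n%:R) - n%:R / (M.+1)%:R * expR (-1)).
Proof.
move=> M_gt0 le_MT n_ge2; cbv zeta; set p : R := (M.+1)%:R^-1.
have n_gt0 : (0 < n)%N by apply: ltnW.
pose i0 : 'I_n := Ordinal n_gt0.
have p01 : 0 <= p < 1 by rewrite invr_ge0 ler0n invf_lt1 ?ltr1n ?ltr0n.
pose q := p * (1 - p) ^+ M.
have cover_bound (x : syn_index T n) : admissible M i0 x ->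
    Prob p (syn_cover x.1.1 x.1.2 x.2.1 x.2.2) <= (1 - q) ^+ n.
  case: x => [[t d] [S s]] /and4P [d_gt0 tS /eqP cardS _].
  rewrite Prob_expect /q; have -> : M = #|S|.+1 by rewrite cardS prednK.
  exact: expect_syn_cover.
have p_le1 : 0 <= p <= 1 by case/andP: p01 => -> /ltW.
apply: le_trans (Prob_union_bound p_le1 (@Esyn_admissible M T n i0) cover_bound) _.
apply: union_tail_le_expR (card_admissible T i0 M_gt0) _ _ => //.
- exact: leq_trans le_MT.
- by case/andP: p01 => p_ge0 _; rewrite ler_wpM2l ?expRN1_le_pow.
- by case/andP: p01 => p_ge0 p_lt1; rewrite mulr_ile1 ?exprn_ge0 ?exprn_ile1 //; lra.
Qed.
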